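(* Let $\Theta$ be a $k\times k$ complex matrix whose spectrum is disjoint from $-\mathbb{N}$, and let $\mathcal{E}(\Theta)$ be the free $B$-module with basis $e=(e_1,\dots,e_k)$ endowed with the action of $a$ determined by $ae=\Theta\,be$ (i.e. $ae_j=\sum_i\Theta_{j,i}be_i$) and $a(S(b)x)=S(b)ax+b^2S'(b)x$ for $S\in B$. Then the continuous actions of the algebras $\mathbb{C}[a]$ and $B$ on $\mathcal{E}(\Theta)$ are the restrictions of a continuous left action of $\tilde{\mathcal{A}}_{conv.}$ on $\mathcal{E}(\Theta)$.
   Context: $\tilde{\mathcal{A}}_{conv.}$ is the algebra of formal series $\sum\gamma_{p,q}a^pb^q$ in variables $a,b$ with $ab-ba=b^2$ (product extending that of the polynomial algebra with this relation) such that $|\gamma_{p,q}|\le C_RR^{p+q}q!$ for some $R>1$, $C_R>0$. $B=\mathbb{C}\{\{b\}\}\subset\tilde{\mathcal{A}}_{conv.}$ is the subalgebra of series $S(b)=\sum c_qb^q$ with $|c_q|\le CR^qq!$ for some $C,R$, and $S'$ is the derivative in $b$. The topologies are the natural inductive limit topologies defined by these Gevrey bounds (on $\mathcal{E}(\Theta)\simeq B^k$ coordinatewise). *)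

From HB Require Import structures.
From mathcomp Require Import all_boot all_order all_algebra.
From mathcomp Require Import reals.
From mathcomp Require Export complex.
Set Implicit Arguments. Unset Strict Implicit. Unset Printing Implicit Defensive.
Import Order.TTheory GRing.Theory Num.Theory.
Local Open Scope ring_scope.
Local Open Scope complex_scope.

Section Defs.
Variable R : realType.
Local Notation C := R[i].

(* A formal series  sum_{p,q} g p q a^p b^q  (normal ordered: a's on the left). *)
Definition series2 := nat -> nat -> C.
Definition series1 := nat -> C.

Definition gev2 (Rr K : R) (g : series2) : Prop :=
  forall p q, `|g p q| <= (K * Rr ^+ (p + q) * (q`!)%:R)%:C.
Definition Aconv (g : series2) : Prop :=
  exists Rr K : R, 1 < Rr /\ 0 < K /\ gev2 Rr K g.

Definition gev1 (Rr K : R) (c : series1) : Prop :=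
  forall q, `|c q| <= (K * Rr ^+ q * (q`!)%:R)%:C.
Definition Bconv (c : series1) : Prop :=
  exists Rr K : R, gev1 Rr K c.

(* Elements of E(Theta) = B^k, written in the basis e: x = sum_i x_i(b) e_i.
   Gevrey bound coordinatewise. *)
Definition Evec (k : nat) := 'I_k -> series1.
Definition gevE k (Rr K : R) (x : Evec k) : Prop := forall i, gev1 Rr K (x i).
Definition Econv k (x : Evec k) : Prop := exists Rr K : R, gevE Rr K x.

(* Normal ordering coefficients:  b^q a^r = sum_i Nord q r i a^i b^(q+r-i),
   from b^m a = a b^m - m b^(m+1)  (a consequence of ab - ba = b^2). *)
Fixpoint Nord (q r i : nat) : C :=
  match r with
  | 0 => (i == 0)%:R
  | r'.+1 => (if i is i'.+1 then Nord q r' i' else 0)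
             - ((q + r')%:R - i%:R) * Nord q r' i
  end.

(* Product of \tilde A_conv (extending the product of C<a,b>/(ab-ba-b^2)):
   (a^p b^q)(a^r b^s) = sum_i Nord q r i a^(p+i) b^(q+r-i+s). All sums finite. *)
Definition amul (f g : series2) : series2 := fun P Q =>
  \sum_(p < (P + Q).+1) \sum_(q < (P + Q).+1) \sum_(r < (P + Q).+1)
  \sum_(s < (P + Q).+1) \sum_(i < (P + Q).+1)
    (if (P == p + i)%N && (Q + i == q + r + s)%N
     then f p q * g r s * Nord q r i else 0).

Definition aadd (f g : series2) : series2 := fun p q => f p q + g p q.
Definition ascale (c : C) (f : series2) : series2 := fun p q => c * f p q.
Definition amon (n : nat) : series2 := fun p q => ((p == n) && (q == 0%N))%:R.
Definition embB (S : series1) : series2 := fun p q => if p == 0%N then S q else 0.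

Definition Eadd k (x y : Evec k) : Evec k := fun i q => x i q + y i q.
Definition Escale k (c : C) (x : Evec k) : Evec k := fun i q => c * x i q.

(* action of a on E(Theta):  a e_j = sum_i Theta_{j,i} b e_i,
   a (S(b) x) = S(b) a x + b^2 S'(b) x.  In coordinates:
   (a x)_i = b sum_j Theta_{j,i} x_j + b^2 x_i'. *)
Definition actA k (Theta : 'M[C]_k) (x : Evec k) : Evec k := fun i q =>
  if q is q'.+1 then \sum_(j < k) Theta j i * x j q' + q'%:R * x i q' else 0.

Definition actB k (S : series1) (x : Evec k) : Evec k := fun i q =>
  \sum_(n < q.+1) S n * x i (q - n)%N.

End Defs.

From HB Require Import structures.
From mathcomp Require Import all_boot all_order all_algebra.
From mathcomp Require Import reals complex boolp functions.
From mathcomp Require Import zify ring lra.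
Set Implicit Arguments. Unset Strict Implicit. Unset Printing Implicit Defensive.
Import Order.TTheory GRing.Theory Num.Theory Normc.
Local Open Scope ring_scope.
Local Open Scope complex_scope.

(* In E(Theta), [a] raises the b-adic order by one and [b^q] by [q], so in the
   series rho(f) x = sum f_pq a^p b^q x only the terms with p + q <= m contribute
   to the coefficient of b^m.  Associativity then reduces, coefficientwise, to the
   normal-ordering rule b^q a^r = sum_l Nord q r l a^l b^(q+r-l), obtained by
   induction from b^q a = a b^q - q b^(q+1), i.e. from ab - ba = b^2; these are
   the coefficients defining the product of \tilde A_conv.  For continuity,
   |a^p b^q x|_m <= T^p (K / q!) R^m m!: the 1/q! produced by b^q absorbs the q!
   allowed in the Gevrey bound of f, and the (m+1)^2 <= 4^m remaining terms give
   a Gevrey bound with radius 4 T R^3. *)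

Section FiniteSums.
Variable V : nmodType.

Lemma big_ord_narrow0 n N (le_nN : (n <= N)%N) (F : 'I_N -> V) :
  (forall j : 'I_N, (n <= j)%N -> F j = 0) ->
  \sum_(j < N) F j = \sum_(j < n) F (widen_ord le_nN j).
Proof.
move=> F0; rewrite -(big_ord_narrow (F := F) le_nN) [RHS]big_mkcond.
by apply: eq_bigr => j _; case: ltnP => // /F0 ->.
Qed.

Lemma sum_ord_delta n a (F : nat -> V) :
  \sum_(j < n) (if j == a :> nat then F j else 0) = if (a < n)%N then F a else 0.
Proof. by rewrite -big_mkcond big_ord1_eq. Qed.

Definition sum5 n (F : nat -> nat -> nat -> nat -> nat -> V) :=
  \sum_(p < n) \sum_(q < n) \sum_(r < n) \sum_(s < n) \sum_(i < n) F p q r s i.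

Lemma eq_sum5 n F G : (forall p q r s i, F p q r s i = G p q r s i) ->
  sum5 n F = sum5 n G.
Proof. by move=> FG; rewrite /sum5; do 5 (apply: eq_bigr => ? _); apply: FG. Qed.

Lemma sum5_widen n N F : (n <= N)%N ->
  (forall p q r s i, (n <= maxn p (maxn q (maxn r (maxn s i))))%N -> F p q r s i = 0) ->
  sum5 n F = sum5 N F.
Proof.
move=> le_nN F0; rewrite /sum5 [RHS](big_ord_narrow0 le_nN) => [|p le_np]; last first.
  by do 4 (rewrite big1 // => ? _); apply: F0; lia.
apply: eq_bigr => p _ /=; rewrite [RHS](big_ord_narrow0 le_nN) => [|q le_nq]; last first.
  by do 3 (rewrite big1 // => ? _); apply: F0; lia.
apply: eq_bigr => q _ /=; rewrite [RHS](big_ord_narrow0 le_nN) => [|r le_nr]; last first.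
  by do 2 (rewrite big1 // => ? _); apply: F0; lia.
apply: eq_bigr => r _ /=; rewrite [RHS](big_ord_narrow0 le_nN) => [|s le_ns]; last first.
  by rewrite big1 // => ? _; apply: F0; lia.
apply: eq_bigr => s _ /=; rewrite [RHS](big_ord_narrow0 le_nN) // => i le_ni.
by apply: F0; lia.
Qed.

Lemma exchange_sum5 n (F : nat -> nat -> nat -> nat -> nat -> nat -> V) :
  \sum_(a < n) sum5 n (F a) = sum5 n (fun p q r s i => \sum_(a < n) F a p q r s i).
Proof.
by rewrite /sum5 exchange_big; do 4 (apply: eq_bigr => ? _; rewrite exchange_big).
Qed.

End FiniteSums.

Lemma sum5_mulr (S : pzSemiRingType) n F (c : S) :
  sum5 n F * c = sum5 n (fun p q r s i => F p q r s i * c).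
Proof. by rewrite /sum5; do 5 (rewrite big_distrl; apply: eq_bigr => ? _). Qed.

Lemma iter_is_linear (K : pzRingType) (V : lmodType K) (f : {linear V -> V}) n :
  linear (iter n f).
Proof. by elim: n => [//|n IH] c u v /=; rewrite IH linearP. Qed.

HB.instance Definition _ (K : pzRingType) (V : lmodType K) (f : {linear V -> V}) n :=
  GRing.isLinear.Build K V V *:%R (iter n f) (iter_is_linear f n).

Lemma sqrnS_le_expn4 m : (m.+1 ^ 2 <= 4 ^ m)%N.
Proof.
elim: m => [//|m IH]; rewrite [X in (_ <= X)%N]expnS.
by apply: leq_trans _ (leq_mul (leqnn 4) IH); nia.
Qed.

Section ComplexNorm.
Variable R : rcfType.

Lemma normc_ge0 (w : R[i]) : 0 <= normc w.
Proof. exact: (@normr_ge0 _ (Rcomplex R)). Qed.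

Lemma normc_sum I (s : seq I) (F : I -> R[i]) :
  normc (\sum_(j <- s) F j) <= \sum_(j <- s) normc (F j).
Proof. exact: (@ler_norm_sum _ (Rcomplex R)). Qed.

Lemma normc_natr n : normc (n%:R : R[i]) = n%:R.
Proof. by rewrite normcMn normc1. Qed.

Lemma lec_normc (w : R[i]) (b : R) : (`|w| <= b%:C) = (normc w <= b).
Proof. exact: lecR. Qed.

End ComplexNorm.

Section Action.
Variables (R : realType) (k : nat) (Theta : 'M[R[i]]_k).
Local Notation C := R[i].
Local Notation E := (Evec R k).
Local Notation A := (actA Theta).
Local Notation Nord := (Nord R).

Lemma EvecP (x y : E) : (forall i n, x i n = y i n) -> x = y.
Proof. by move=> xy; apply/funext => i; apply/funext => n; exact: xy. Qed.

Lemma Evec_addE (x y : E) i n : (x + y) i n = x i n + y i n.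
Proof. by []. Qed.

Lemma Evec_scaleE c (x : E) i n : (c *: x) i n = c * x i n.
Proof. by []. Qed.

Lemma Evec_subE (x y : E) i n : (x - y) i n = x i n - y i n.
Proof. by []. Qed.

Lemma Evec_sumE I (s : seq I) (G : I -> E) i n :
  (\sum_(r <- s) G r) i n = \sum_(r <- s) G r i n.
Proof. by rewrite !fct_sumE. Qed.

Lemma actA_is_linear : linear A.
Proof.
move=> c x y; apply: EvecP => i [|n]; rewrite Evec_addE Evec_scaleE /actA ?mulr0 ?addr0 //.
under eq_bigr do rewrite Evec_addE Evec_scaleE mulrDr mulrCA.
by rewrite big_split /= -mulr_sumr Evec_addE Evec_scaleE; ring.
Qed.

HB.instance Definition _ := GRing.isLinear.Build C E E *:%R A actA_is_linear.

Definition actBn q (x : E) : E := fun i n => if (q <= n)%N then x i (n - q)%N else 0.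

Lemma actBn_is_linear q : linear (actBn q).
Proof.
move=> c x y; apply: EvecP => i n; rewrite Evec_addE Evec_scaleE /actBn.
by case: ifP; rewrite ?mulr0 ?addr0.
Qed.

HB.instance Definition _ q := GRing.isLinear.Build C E E *:%R (actBn q) (actBn_is_linear q).

Lemma actBn0 x : actBn 0 x = x.
Proof. by apply: EvecP => i n; rewrite /actBn subn0. Qed.

Lemma actBnD q q' x : actBn q (actBn q' x) = actBn (q + q') x.
Proof.
apply: EvecP => i n; rewrite /actBn.
by case: (leqP q n) => ?; case: (leqP q' (n - q)) => ?; case: (leqP (q + q') n) => ? //;
  rewrite ?subnDA //; lia.
Qed.

Definition actAB p q : E -> E := iter p A \o actBn q.

HB.instance Definition _ p q := GRing.Linear.on (actAB p q).

Definition vanishes_below v (z : E) := forall i n, (n < v)%N -> z i n = 0.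

Lemma actA_vanishes v z : vanishes_below v z -> vanishes_below v.+1 (A z).
Proof.
move=> z0 i [|n] lt_nv //=; rewrite /actA z0 // mulr0 addr0.
by rewrite big1 // => j _; rewrite z0 ?mulr0.
Qed.

Lemma iter_actA_vanishes p v z : vanishes_below v z -> vanishes_below (p + v) (iter p A z).
Proof. by move=> z0; elim: p => [//|p IH]; exact: actA_vanishes. Qed.

Lemma actBn_vanishes q v x : vanishes_below v x -> vanishes_below (q + v) (actBn q x).
Proof. by move=> x0 i n lt_n; rewrite /actBn; case: leqP => // ?; rewrite x0 //; lia. Qed.

Lemma actAB_vanishes p q v x :
  vanishes_below v x -> vanishes_below (p + q + v) (actAB p q x).
Proof. by move=> x0; rewrite -addnA; exact/iter_actA_vanishes/actBn_vanishes. Qed.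

Lemma actAB_eq0 p q x i n : (n < p + q)%N -> actAB p q x i n = 0.
Proof.
by move=> lt_n; apply: (actAB_vanishes (v := 0)) => [//|]; rewrite addn0.
Qed.

Lemma actAB_local p q m (y y' : E) : (forall i n, (n <= m)%N -> y i n = y' i n) ->
  forall i n, (n <= m)%N -> actAB p q y i n = actAB p q y' i n.
Proof.
move=> yy' i n le_nm; apply/eqP; rewrite -subr_eq0 -Evec_subE -linearB; apply/eqP.
apply: (actAB_vanishes (v := m.+1)); last by lia.
by move=> j l lt_lm; rewrite Evec_subE yy' ?subrr.
Qed.

Lemma actBn_actA q z : actBn q (A z) = A (actBn q z) - q%:R *: actBn q.+1 z.
Proof.
apply: EvecP => i [|n]; rewrite Evec_subE Evec_scaleE /actBn /actA /=.
  by case: q => [|q] //=; rewrite mulr0 subr0.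
case: (leqP q n) => [le_qn|lt_nq].
  by rewrite (leqW le_qn) subSn // ltnS le_qn subSS natrB //; ring.
rewrite big1 => [|j _]; last exact: mulr0.
rewrite (_ : q < n.+1 = false)%N; last by lia.
rewrite !mulr0 addr0 subrr.
by case: ifP => // _; rewrite (_ : n.+1 - q = 0)%N //; lia.
Qed.

Lemma Nord_eq0 q r l : (r < l)%N -> Nord q r l = 0.
Proof.
elim: r l => [|r IH] [|l] //= lt_rl.
by rewrite !IH ?mulr0 ?subr0 //; lia.
Qed.

Lemma NordS q r l : Nord q r.+1 l =
  (if l is l'.+1 then Nord q r l' else 0) - ((q + r)%:R - l%:R) * Nord q r l.
Proof. by []. Qed.

Lemma actBn_iter_actA q r z : actBn q (iter r A z) =
  \sum_(l < r.+1) Nord q r l *: iter l A (actBn (q + r - l) z).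
Proof.
elim: r z => [|r IH] z; first by rewrite big_ord1 /= addn0 subn0 scale1r.
rewrite iterSr IH.
under eq_bigr do rewrite actBn_actA linearB linearZ /= -iterSr scalerBr.
under [RHS]eq_bigr do rewrite NordS scalerBl.
rewrite !sumrB; congr (_ - _).
  by rewrite [RHS]big_ord_recl scale0r add0r; apply: eq_bigr => l _; rewrite addnS subSS.
rewrite [RHS]big_ord_recr /= Nord_eq0 // mulr0 scale0r addr0.
apply: eq_bigr => l _; have le_l : (l <= q + r)%N by have := ltn_ord l; lia.
by rewrite scalerA mulrC -natrB // addnS subSn.
Qed.

Lemma actAB_comp p q r s x : actAB p q (actAB r s x) =
  \sum_(l < r.+1) Nord q r l *: actAB (p + l) (q + r + s - l) x.
Proof.
rewrite /actAB /= actBn_iter_actA linear_sum; apply: eq_bigr => l _.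
have le_l : (l <= q + r)%N by have := ltn_ord l; lia.
by rewrite linearZ /= actBnD iterD addnBAC.
Qed.

Definition rho (f : series2 R) (x : E) : E := fun i m =>
  \sum_(p < m.+1) \sum_(q < m.+1) f p q * actAB p q x i m.

Lemma rho_widen f x i m N : (m < N)%N ->
  rho f x i m = \sum_(p < N) \sum_(q < N) f p q * actAB p q x i m.
Proof.
move=> lt_mN; rewrite [RHS](big_ord_narrow0 lt_mN) => [|p le_mp]; last first.
  by rewrite big1 // => q _; rewrite actAB_eq0 ?mulr0 //; lia.
apply: eq_bigr => p _ /=; rewrite [RHS](big_ord_narrow0 lt_mN) // => q le_mq.
by rewrite actAB_eq0 ?mulr0 //; lia.
Qed.

Lemma actAB_addE p q x y i n : actAB p q (x + y) i n = actAB p q x i n + actAB p q y i n.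
Proof. by rewrite linearD. Qed.

Lemma actAB_scaleE p q c z i n : actAB p q (c *: z) i n = c * actAB p q z i n.
Proof. by rewrite linearZ. Qed.

Lemma actAB_sumE p q I (s : seq I) (G : I -> E) i n :
  actAB p q (\sum_(r <- s) G r) i n = \sum_(r <- s) actAB p q (G r) i n.
Proof. by rewrite linear_sum Evec_sumE. Qed.

Lemma rho_linear f c x y : rho f (x + c *: y) = rho f x + c *: rho f y.
Proof.
apply: EvecP => i m; rewrite !Evec_addE Evec_scaleE /rho mulr_sumr -big_split.
apply: eq_bigr => p _; rewrite mulr_sumr -big_split; apply: eq_bigr => q _.
by rewrite actAB_addE actAB_scaleE mulrDr mulrCA.
Qed.

Lemma rho_series_linear f g c x :
  rho (aadd f (ascale c g)) x = rho f x + c *: rho g x.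
Proof.
apply: EvecP => i m; rewrite Evec_addE Evec_scaleE /rho mulr_sumr -big_split.
apply: eq_bigr => p _; rewrite mulr_sumr -big_split; apply: eq_bigr => q _.
by rewrite /aadd /ascale mulrDl mulrA.
Qed.

Lemma rho_amon n x : rho (amon R n) x = iter n A x.
Proof.
apply: EvecP => i m; rewrite /rho /amon.
transitivity (\sum_(p < m.+1) (if p == n :> nat then actAB p 0 x i m else 0)).
  apply: eq_bigr => p _; rewrite big_ord_recl big1 => [|q _]; last by rewrite andbF mul0r.
  by rewrite andbT addr0; case: eqP; rewrite ?mul1r ?mul0r.
rewrite (sum_ord_delta _ _ (fun p => actAB p 0 x i m)) /actAB /= actBn0.
case: ltnP => // lt_mn; apply/esym/(iter_actA_vanishes (v := 0)) => [//|].
by rewrite addn0.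
Qed.

Lemma rho_embB S x : rho (embB S) x = actB S x.
Proof.
apply: EvecP => i m; rewrite /rho /embB /actB big_ord_recl.
rewrite [X in _ + X]big1 ?addr0 => [|p _]; last by rewrite big1 // => q _; rewrite mul0r.
by apply: eq_bigr => q _; rewrite /actAB /= /actBn -ltnS ltn_ord.
Qed.

Definition amul_term (f g : series2 R) P Q p q r s i : C :=
  if (P == p + i)%N && (Q + i == q + r + s)%N then f p q * g r s * Nord q r i else 0.

Lemma amul_widen f g P Q N : (P + Q < N)%N -> amul f g P Q = sum5 N (amul_term f g P Q).
Proof.
move=> lt_N; apply: sum5_widen => // p q r s i le_PQ.
by rewrite /amul_term; case: ifP => // /andP[/eqP eP /eqP eQ]; lia.
Qed.

Lemma amul_term_collapse f g (t : nat -> nat -> C) N p q r s i :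
  (forall P Q, (N <= P + Q)%N -> t P Q = 0) ->
  \sum_(P < N) \sum_(Q < N) amul_term f g P Q p q r s i * t P Q =
  f p q * g r s * Nord q r i * t (p + i)%N (q + r + s - i)%N.
Proof.
move=> t0; case: (leqP i r) => [le_ir|lt_ri]; last first.
  rewrite Nord_eq0 // mulr0 mul0r big1 // => P _; rewrite big1 // => Q _.
  by rewrite /amul_term Nord_eq0 // mulr0 if_same mul0r.
set c := f p q * g r s * Nord q r i; set M := (q + r + s - i)%N.
pose G P := \sum_(Q < N) (if Q == M :> nat then c * t P Q else 0).
transitivity (\sum_(P < N) (if P == p + i :> nat then G P else 0)).
  apply: eq_bigr => P _; rewrite /G; case: eqP => [eP|neP]; last first.
    by rewrite big1 // => Q _; rewrite /amul_term (introF eqP neP) mul0r.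
  apply: eq_bigr => Q _; rewrite /amul_term eP eqxx /=.
  have le_i : (i <= q + r + s)%N by lia.
  have -> : (Q == M :> nat) = (Q + i == q + r + s)%N by rewrite /M -(eqn_add2r i) subnK.
  by case: eqP; rewrite ?mul0r.
rewrite (sum_ord_delta _ _ G) /G (sum_ord_delta _ _ (fun Q => c * t (p + i)%N Q)).
have [lt_pN|le_Np] := ltnP (p + i) N; have [lt_MN|le_NM] := ltnP M N => //;
  by rewrite t0 ?mulr0 //; lia.
Qed.

Lemma sum_amul_pairing f g (t : nat -> nat -> C) N :
  (forall P Q, (N <= P + Q)%N -> t P Q = 0) ->
  \sum_(P < N) \sum_(Q < N) amul f g P Q * t P Q =
  sum5 N (fun p q r s i => f p q * g r s * Nord q r i * t (p + i)%N (q + r + s - i)%N).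
Proof.
move=> t0.
transitivity (\sum_(P < N) \sum_(Q < N)
  sum5 N (fun p q r s i => amul_term f g P Q p q r s i * t P Q)).
  apply: eq_bigr => P _; apply: eq_bigr => Q _; rewrite -sum5_mulr.
  have [lt_PQ|le_NPQ] := ltnP (P + Q) N; first by rewrite (amul_widen _ _ lt_PQ).
  by rewrite t0 // !mulr0.
under eq_bigr => P _ do
  rewrite (exchange_sum5 _ (fun Q p q r s i => amul_term f g P Q p q r s i * t P Q)).
rewrite (exchange_sum5 _ (fun P p q r s i => \sum_(Q < N) amul_term f g P Q p q r s i * t P Q)).
by apply: eq_sum5 => p q r s i; exact: amul_term_collapse.
Qed.

Lemma actAB_rho p q g x j m : actAB p q (rho g x) j m =
  \sum_(r < m.+1) \sum_(s < m.+1) \sum_(l < m.+1)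
    g r s * Nord q r l * actAB (p + l) (q + r + s - l) x j m.
Proof.
pose y := \sum_(r < m.+1) \sum_(s < m.+1) g r s *: actAB r s x.
rewrite (@actAB_local _ _ m _ y) // => [|i n le_nm]; last first.
  rewrite (@rho_widen _ _ _ _ m.+1) // /y Evec_sumE.
  by apply: eq_bigr => r _; rewrite Evec_sumE.
rewrite /y actAB_sumE; apply: eq_bigr => r _; rewrite actAB_sumE; apply: eq_bigr => s _.
rewrite actAB_scaleE actAB_comp Evec_sumE mulr_sumr.
rewrite [RHS](big_ord_narrow0 (ltn_ord r)) => [|l lt_rl]; last by rewrite Nord_eq0 ?mulr0 ?mul0r.
by apply: eq_bigr => l _; rewrite Evec_scaleE mulrA.
Qed.

Lemma rho_amul f g x : rho (amul f g) x = rho f (rho g x).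
Proof.
apply: EvecP => j m; rewrite {1}/rho (@sum_amul_pairing f g (fun P Q => actAB P Q x j m) m.+1).
  rewrite /rho /sum5; apply: eq_bigr => p _; apply: eq_bigr => q _.
  rewrite actAB_rho !mulr_sumr; apply: eq_bigr => r _; rewrite mulr_sumr.
  by apply: eq_bigr => s _; rewrite mulr_sumr; apply: eq_bigr => l _; rewrite !mulrA.
by move=> P Q lt_m; exact: actAB_eq0.
Qed.

Definition Theta_bound : R := 1 + \sum_(i < k) \sum_(j < k) normc (Theta j i).

Lemma Theta_bound_ge1 : 1 <= Theta_bound.
Proof.
by rewrite lerDl; apply: sumr_ge0 => i _; apply: sumr_ge0 => j _; exact: normc_ge0.
Qed.

Lemma Theta_col_norm_le i : \sum_(j < k) normc (Theta j i) <= Theta_bound - 1.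
Proof.
rewrite /Theta_bound [1 + _]addrC addrK [leRHS](bigD1 i) //= lerDl.
by apply: sumr_ge0 => i' _; apply: sumr_ge0 => j _; exact: normc_ge0.
Qed.

Definition gevrey_bound (L c : R) (z : E) := forall i n, normc (z i n) <= L * c ^+ n * n`!%:R.

Lemma gevrey_bound_actA L c z : 0 <= L -> 1 <= c -> gevrey_bound L c z ->
  gevrey_bound (Theta_bound * L) c (A z).
Proof.
move=> L0 c1 zb i [|n]; rewrite /actA.
  by rewrite normc0 expr0 !mulr1 mulr_ge0 // (le_trans ler01 Theta_bound_ge1).
set B := L * c ^+ n * n`!%:R.
have B0 : 0 <= B by rewrite mulr_ge0 ?mulr_ge0 ?exprn_ge0 // (le_trans ler01).
have sum_le : normc (\sum_(j < k) Theta j i * z j n) <= (Theta_bound - 1) * B.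
  apply: le_trans (normc_sum _ _) _; apply: le_trans (ler_wpM2r B0 (Theta_col_norm_le i)).
  by rewrite mulr_suml; apply: ler_sum => j _; rewrite normcM ler_wpM2l ?normc_ge0.
have diag_le : normc (n%:R * z i n) <= n%:R * B.
  by rewrite normcM normc_natr ler_wpM2l.
have -> : Theta_bound * L * c ^+ n.+1 * n.+1`!%:R = (Theta_bound * c * n.+1%:R) * B.
  by rewrite /B factS natrM exprSr; ring.
apply: le_trans (le_normcD _ _) _; apply: le_trans (lerD sum_le diag_le) _.
rewrite -mulrDl ler_wpM2r // -natr1.
have T1 := Theta_bound_ge1; have n0 : 0 <= n%:R :> R by [].
have Tc : Theta_bound <= Theta_bound * c by rewrite ler_peMr // (le_trans ler01).
nra.
Qed.

Lemma gevrey_bound_iter_actA p L c z : 0 <= L -> 1 <= c -> gevrey_bound L c z ->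
  gevrey_bound (Theta_bound ^+ p * L) c (iter p A z).
Proof.
move=> L0 c1 zb; elim: p => [|p IH]; first by rewrite expr0 mul1r.
rewrite exprS -mulrA; apply: gevrey_bound_actA => //.
by rewrite mulr_ge0 // exprn_ge0 // (le_trans ler01 Theta_bound_ge1).
Qed.

Lemma gevrey_bound_actBn q L c x : 0 <= L -> 1 <= c -> gevrey_bound L c x ->
  gevrey_bound (L / q`!%:R) c (actBn q x).
Proof.
move=> L0 c1 xb i n; rewrite /actBn.
have c0 : 0 <= c by rewrite (le_trans ler01).
have q0 : 0 < q`!%:R :> R by rewrite ltr0n fact_gt0.
case: leqP => [le_qn /=|_]; last first.
  by rewrite normc0; apply: mulr_ge0 => //; apply: mulr_ge0; rewrite ?exprn_ge0 ?divr_ge0.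
apply: le_trans (xb i (n - q)%N) _.
have fact_le : (n - q)`!%:R * q`!%:R <= n`!%:R :> R.
  by rewrite -natrM ler_nat -(bin_fact le_qn) mulnC leq_pmull // bin_gt0.
have exp_le : c ^+ (n - q) <= c ^+ n by rewrite ler_weXn2l // leq_subr.
have -> : L / q`!%:R * c ^+ n * n`!%:R = L * (c ^+ n * (n`!%:R / q`!%:R)) by ring.
by rewrite -mulrA ler_wpM2l // ler_pM ?exprn_ge0 // ler_pdivlMr.
Qed.

Lemma gevrey_bound_actAB p q L c x : 0 <= L -> 1 <= c -> gevrey_bound L c x ->
  gevrey_bound (Theta_bound ^+ p * (L / q`!%:R)) c (actAB p q x).
Proof.
move=> L0 c1 xb; apply: gevrey_bound_iter_actA => //; first exact: divr_ge0.
exact: gevrey_bound_actBn.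
Qed.

Lemma rho_gevrey Rr K1 K2 f x : 1 < Rr -> gev2 Rr K1 f -> gevE Rr K2 x ->
  gevE (4 * Theta_bound * Rr ^+ 3) (K1 * K2) (rho f x).
Proof.
move=> Rr1 fb xb i m; rewrite lec_normc; have c1 := ltW Rr1.
have fb' p q : normc (f p q) <= K1 * Rr ^+ (p + q) * q`!%:R by rewrite -lec_normc.
have xb' : gevrey_bound K2 Rr x by move=> j n; rewrite -lec_normc; exact: xb.
have K10 : 0 <= K1.
  by have := fb' 0%N 0%N; rewrite expr0 !mulr1; apply: le_trans (normc_ge0 _).
have K20 : 0 <= K2.
  by have := xb' i 0%N; rewrite expr0 !mulr1; apply: le_trans (normc_ge0 _).
set B := K1 * K2 * (Theta_bound * Rr ^+ 3) ^+ m * m`!%:R.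
have B0 : 0 <= B.
  by rewrite !mulr_ge0 ?exprn_ge0 ?mulr_ge0 ?exprn_ge0 // (le_trans ler01) ?Theta_bound_ge1.
have term_le (p q : 'I_m.+1) : normc (f p q * actAB p q x i m) <= B.
  have ht := gevrey_bound_actAB p q K20 c1 xb' i m.
  rewrite normcM; apply: le_trans (ler_pM (normc_ge0 _) (normc_ge0 _) (fb' p q) ht) _.
  have q0 : q`!%:R != 0 :> R by rewrite pnatr_eq0 -lt0n fact_gt0.
  have -> : K1 * Rr ^+ (p + q) * q`!%:R * (Theta_bound ^+ p * (K2 / q`!%:R) * Rr ^+ m * m`!%:R)
      = K1 * K2 * (Theta_bound ^+ p * Rr ^+ (p + q + m)) * m`!%:R by rewrite !exprD; field.
  have [le_pm le_qm] : (p <= m)%N /\ (q <= m)%N by split; rewrite -ltnS.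
  rewrite /B exprMn -exprM ler_wpM2r // ler_wpM2l ?mulr_ge0 // ler_pM ?exprn_ge0 //.
  - by rewrite (le_trans ler01) ?Theta_bound_ge1.
  - exact: le_trans ler01 c1.
  - by apply: ler_weXn2l => //; exact: Theta_bound_ge1.
  - by apply: ler_weXn2l => //; lia.
rewrite /rho; apply: le_trans (normc_sum _ _) _.
apply: le_trans (_ : \sum_(p < m.+1) \sum_(q < m.+1) B <= _).
  apply: ler_sum => p _; apply: le_trans (normc_sum _ _) _.
  by apply: ler_sum => q _; exact: term_le.
rewrite !sumr_const !card_ord -mulrnA -[B *+ _]mulr_natr.
have -> : K1 * K2 * (4 * Theta_bound * Rr ^+ 3) ^+ m * m`!%:R = B * (4 ^ m)%:R.
  by rewrite /B natrX !exprMn; ring.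
by rewrite ler_wpM2l // ler_nat mulnn sqrnS_le_expn4.
Qed.

End Action.

Theorem corollary1p1p9 (R : realType) (k : nat) (Theta : 'M[R[i]]_k) :
  (forall n : nat, ~~ eigenvalue Theta (- (n%:R : R[i]))) ->
  exists rho : series2 R -> Evec R k -> Evec R k,
    (* left module structure *)
    (forall f g c x, Aconv f -> Aconv g -> Econv x ->
       rho (aadd f (ascale c g)) x = Eadd (rho f x) (Escale c (rho g x))) /\
    (forall f c x y, Aconv f -> Econv x -> Econv y ->
       rho f (Eadd x (Escale c y)) = Eadd (rho f x) (Escale c (rho f y))) /\
    (forall x, Econv x -> rho (amon R 0) x = x) /\
    (forall f g x, Aconv f -> Aconv g -> Econv x ->
       rho (amul f g) x = rho f (rho g x)) /\
    (* restriction to C[a] and to B *)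
    (forall (n : nat) x, Econv x -> rho (amon R n) x = iter n (actA Theta) x) /\
    (forall S x, Bconv S -> Econv x -> rho (embB S) x = actB S x) /\
    (* continuity for the inductive limit (Gevrey) topologies *)
    (forall Rr : R, 1 < Rr -> exists (Rr' M : R), 1 < Rr' /\ 0 < M /\
       forall (f : series2 R) (x : Evec R k) (K1 K2 : R),
         gev2 Rr K1 f -> gevE Rr K2 x -> gevE Rr' (M * K1 * K2) (rho f x)).
Proof.
move=> _; exists (rho Theta).
split; first by move=> f g c x _ _ _; exact: rho_series_linear.
split; first by move=> f c x y _ _ _; exact: rho_linear.
split; first by move=> x _; exact: rho_amon.
split; first by move=> f g x _ _ _; exact: rho_amul.
split; first by move=> n x _; exact: rho_amon.
split; first by move=> S x _ _; exact: rho_embB.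
move=> Rr Rr1; exists (4 * Theta_bound Theta * Rr ^+ 3), 1; split; last split.
- have T1 := Theta_bound_ge1 Theta.
  have Rr3 : 1 < Rr ^+ 3 by rewrite expr_gt1 // ltW // (lt_trans ltr01).
  nra.
- exact: ltr01.
- by move=> f x K1 K2; rewrite mul1r; exact: rho_gevrey.
Qed.
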